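(* Let $G=G_{\mathbf E}$ be a multi-GGS group which is not the constant GGS group. Then $$N_{\mathrm{lab}(\Sigma)}(A)\le C(A)\qquad\text{and}\qquad N_{\mathrm{lab}(\Sigma)}(B)\le C(B),$$ where $C(\cdot)$ denotes the centraliser in $\mathrm{Aut}(X^* )$.
   Context: Let $p$ be an odd prime and $X=\{0,1,\dots,p-1\}$, identified with $\mathbb F_p$. $X^*$ is the $p$-regular rooted tree of finite words over $X$; $\mathrm{Aut}(X^* )$ acts on the right. Sections $g|_v$ are defined by $(vw)^g=v^g\,w^{g|_v}$, and the label $g|^v\in\mathrm{Sym}(X)$ is the permutation by which $g|_v$ acts on one-letter words. $\mathrm{Stab}(1)$ is the stabiliser of all one-letter words and $\psi_1\colon\mathrm{Stab}(1)\to\mathrm{Aut}(X^* )^p$, $g\mapsto(g|_0,\dots,g|_{p-1})$, is an isomorphism. $\sigma=(0\,1\,\cdots\,p-1)$, $\Sigma=\langle\sigma\rangle$; $a$ is the rooted automorphism acting as $\sigma$ on the first letter and trivially on the rest, $A=\langle a\rangle$. $\mathrm{lab}(\Sigma)=\{g\in\mathrm{Aut}(X^* )\mid g|^v\in\Sigma\text{ for all } v\in X^*\}$. Let $\mathbf E\le\mathbb F_p^{p-1}$ be a subspace of dimension $r\ge1$; $E$ is the $r\times(p-1)$ matrix whose rows form a fixed basis of $\mathbf E$, with columns $\mathbf e_1,\dots,\mathbf e_{p-1}$. For $\mathbf n\in\mathbb F_p^r$, $b^{\mathbf n}\in\mathrm{Stab}(1)$ is the unique automorphism with $\psi_1(b^{\mathbf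 n})=(b^{\mathbf n},a^{\mathbf n\cdot\mathbf e_1},\dots,a^{\mathbf n\cdot\mathbf e_{p-1}})$; $B=\{b^{\mathbf n}\}$. $G_{\mathbf E}$ is generated by $a$ and $B$; it is the constant GGS group if $\mathbf E=\{(\lambda,\dots,\lambda)\mid\lambda\in\mathbb F_p\}$. *)

From mathcomp Require Import all_boot all_order all_fingroup all_algebra.
Set Implicit Arguments. Unset Strict Implicit. Unset Printing Implicit Defensive.
Import GRing.Theory.
Local Open Scope ring_scope.

Notation X p := ('F_p : finFieldType).

(* An automorphism of the rooted tree X^* is represented by its portrait:
   the map v |-> g|^v in Sym(X) (every portrait gives a unique automorphism
   and conversely). *)
Definition tree_aut (p : nat) := seq (X p) -> {perm X p}.

Definition aut_eq p (g h : tree_aut p) : Prop := forall v, g v = h v.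

Definition tree_sect p (g : tree_aut p) (u : seq (X p)) : tree_aut p := fun v => g (u ++ v).

Fixpoint tree_act p (g : tree_aut p) (v : seq (X p)) : seq (X p) :=
  match v with
  | [::] => [::]
  | x :: w => g [::] x :: tree_act (tree_sect g [:: x]) w
  end.

Fixpoint tree_invact p (g : tree_aut p) (v : seq (X p)) : seq (X p) :=
  match v with
  | [::] => [::]
  | x :: w => let y := (g [::])^-1%g x in y :: tree_invact (tree_sect g [:: y]) w
  end.

(* product: first g, then h  ((gh)|^v = g|^v h|^(v^g)); mathcomp's
   perm product s * t is "first s then t". *)
Definition aut_mul p (g h : tree_aut p) : tree_aut p := fun v => (g v * h (tree_act g v))%g.

Definition aut_inv p (g : tree_aut p) : tree_aut p := fun v => ((g (tree_invact g v))^-1)%g.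

Definition sigma_cyc p : {perm X p} := perm (addIr (1 : X p)).

Definition lab_Sigma p (g : tree_aut p) : Prop := forall v, g v \in <[sigma_cyc p]>%g.

Definition apow p (k : nat) : tree_aut p :=
  fun v => if v is [::] then (sigma_cyc p ^+ k)%g else 1%g.

Definition setA_tree p (h : tree_aut p) : Prop := exists k : nat, aut_eq h (@apow p k).

(* n . e_x for a letter x <> 0, the column of E for letter x being
   column x-1 (columns indexed by 'I_(p-1)). *)
Definition bexp p r (E : 'M[X p]_(r, p.-1)) (n : 'rV[X p]_r) (x : X p) : X p :=
  \sum_(j < p.-1 | (j.+1 == x)%N) (n *m E) 0 j.

(* portrait of b^n: psi_1(b^n) = (b^n, a^{n.e_1}, ..., a^{n.e_(p-1)}) *)
Fixpoint bport p r (E : 'M[X p]_(r, p.-1)) (n : 'rV[X p]_r) (v : seq (X p))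
  : {perm X p} :=
  match v with
  | [::] => 1%g
  | x :: w =>
      if x == 0 then bport E n w
      else if w is [::] then (sigma_cyc p ^+ (bexp E n x : nat))%g else 1%g
  end.

Definition setB_tree p r (E : 'M[X p]_(r, p.-1)) (h : tree_aut p) : Prop :=
  exists n : 'rV[X p]_r, aut_eq h (bport E n).

Definition tree_normalises p (S : tree_aut p -> Prop) (g : tree_aut p) : Prop :=
  (forall h, S h -> S (aut_mul (aut_mul (aut_inv g) h) g)) /\
  (forall h, S h -> exists h', S h' /\
                    aut_eq (aut_mul (aut_mul (aut_inv g) h') g) h).

Definition tree_centralises p (S : tree_aut p -> Prop) (g : tree_aut p) : Prop :=
  forall h, S h -> aut_eq (aut_mul g h) (aut_mul h g).

From mathcomp Require Import all_boot all_order all_fingroup all_algebra.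
Set Implicit Arguments. Unset Strict Implicit. Unset Printing Implicit Defensive.
Import GRing.Theory.
Local Open Scope ring_scope.

(** Let g in lab(Sigma) have root label sigma^k and conjugate h.  At the root,
   g^-1 h g has label (g|^0)^-1 h|^0 g|^0 = h|^0 because labels lie in the
   cyclic group Sigma.  For h = a^i nothing else happens below the root, so
   g^-1 a^i g = a^i as soon as it lies in A.  For h = b^n, the conjugate
   b^n' has level-1 labels shifted by k: n'.e_(x+k) = n.e_x.  If k <> 0 in
   F_p, iterating the shift moves every letter to 0, where all labels are
   trivial, so E = 0; hence k = 0 and b^n' has the same portrait as b^n. *)

Section TreeAutomorphisms.
Variable p : nat.
Implicit Types (g h : tree_aut p) (u v : seq (X p)).

Definition aut_conj g h : tree_aut p := aut_mul (aut_mul (aut_inv g) h) g.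

Lemma eq_tree_act g h : aut_eq g h -> tree_act g =1 tree_act h.
Proof.
move=> eq_gh v; elim: v g h eq_gh => [|x w IHw] g h eq_gh //=.
by rewrite eq_gh; congr (_ :: _); apply: IHw => v; apply: eq_gh.
Qed.

Lemma tree_actK g : cancel (tree_act g) (tree_invact g).
Proof. by move=> u; elim: u g => [|x w IHw] g //=; rewrite permK IHw. Qed.

Lemma tree_act_inv g : tree_act (aut_inv g) =1 tree_invact g.
Proof.
move=> v; elim: v g => [|x w IHw] g //=.
by congr (_ :: _); rewrite -IHw; apply: eq_tree_act.
Qed.

Lemma tree_act_mul g h v : tree_act (aut_mul g h) v = tree_act h (tree_act g v).
Proof.
elim: v g h => [|x w IHw] g h //=.
by rewrite permM; congr (_ :: _); rewrite -IHw; apply: eq_tree_act.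
Qed.

Lemma aut_conjE g h u :
  aut_conj g h (tree_act g u) = ((g u)^-1 * h u * g (tree_act h u))%g.
Proof.
by rewrite /aut_conj /aut_mul tree_act_mul tree_act_inv tree_actK /aut_inv tree_actK.
Qed.

Lemma aut_commute_of_conj g h :
  aut_eq (aut_conj g h) h -> aut_eq (aut_mul g h) (aut_mul h g).
Proof.
move=> conj_h u; rewrite /aut_mul -conj_h aut_conjE.
by rewrite !mulgA mulgV mul1g.
Qed.

End TreeAutomorphisms.

Lemma cycle_conj_fix (gT : finGroupType) (x s t : gT) :
  s \in <[x]>%g -> t \in <[x]>%g -> (s^-1 * t * s)%g = t.
Proof.
case/cycleP=> i ->; case/cycleP=> j ->.
by rewrite -mulgA (commuteX2 j i (commute_refl x)) mulKg.
Qed.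

Lemma sigma_cycX p k (x : X p) : (sigma_cyc p ^+ k)%g x = x + k%:R.
Proof.
elim: k x => [|k IHk] x; first by rewrite expg0 perm1 addr0.
by rewrite expgSr permM IHk permE -addrA -mulrSr.
Qed.

Lemma sigma_cyc_expI p (a b : X p) :
  (sigma_cyc p ^+ a)%g = (sigma_cyc p ^+ b)%g -> a = b.
Proof.
by move/(congr1 (fun s : {perm X p} => s 0)); rewrite !sigma_cycX !add0r !natr_Zp.
Qed.

Lemma lab_root_cycle p (g : tree_aut p) :
  lab_Sigma g -> exists k, g [::] = (sigma_cyc p ^+ k)%g.
Proof. by move=> labg; case/cycleP: (labg [::]) => k ->; exists k. Qed.

Theorem lab_normaliser_A_centralises p (g : tree_aut p) :
  lab_Sigma g -> tree_normalises (@setA_tree p) g ->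
  tree_centralises (@setA_tree p) g.
Proof.
move=> labg [normg _] h Ah; apply: aut_commute_of_conj => -[|x w].
- rewrite (aut_conjE g h [::]) /= (cycle_conj_fix (labg [::])) //.
  by case: Ah => k ->; apply: mem_cycle.
- have [k' conj_h] := normg h Ah; case: Ah => k ->.
  exact: conj_h.
Qed.

Lemma shift_closed_family_at0 p (I T : Type) (F : I -> X p -> T) (m : X p) :
  m != 0 -> (forall i, exists i', forall x, F i' (x + m) = F i x) ->
  forall i x, exists i', F i x = F i' 0.
Proof.
move=> m_neq0 shiftF.
have shiftFn j i : exists i', forall x, F i' (x + j%:R * m) = F i x.
  elim: j i => [|j IHj] i; first by exists i => x; rewrite mul0r addr0.
  have [i1 Fi1] := IHj i; have [i2 Fi2] := shiftF i1.
  by exists i2 => x; rewrite -Fi1 -Fi2 mulrSr mulrDl mul1r addrA.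
move=> i x; have [i' Fi'] := shiftFn (- x / m : X p) i.
by exists i'; rewrite -Fi' natr_Zp divfK // addrN.
Qed.

Section BGenerators.
Variables (p r : nat) (E : 'M[X p]_(r, p.-1)).

Lemma bexp0 n : bexp E n 0 = 0.
Proof. by rewrite /bexp big_pred0. Qed.

Lemma bport_letter n y : bport E n [:: y] = (sigma_cyc p ^+ bexp E n y)%g.
Proof. by rewrite /=; case: eqP => [->|//]; rewrite bexp0 expg0. Qed.

Lemma eq_bport n n' : bexp E n =1 bexp E n' -> bport E n =1 bport E n'.
Proof.
move=> eq_nn' v; elim: v => [|x w IHw] //=.
by case: eqP => // _; case: w IHw => // _; rewrite eq_nn'.
Qed.

Lemma bexp_conj_shift (g h : tree_aut p) n n' k :
  lab_Sigma g -> g [::] = (sigma_cyc p ^+ k)%g ->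
  aut_eq h (bport E n) -> aut_eq (aut_conj g h) (bport E n') ->
  forall x, bexp E n' (x + k%:R) = bexp E n x.
Proof.
move=> labg gk hn conj_h x; apply: sigma_cyc_expI.
have := aut_conjE g h [:: x].
rewrite /= gk sigma_cycX conj_h bport_letter (hn [::]) /= perm1.
by rewrite (cycle_conj_fix (labg _)) hn bport_letter ?mem_cycle.
Qed.

Lemma bexp_eq0_mx : prime p -> (forall n x, bexp E n x = 0) -> E = 0.
Proof.
move=> p_pr bexp_eq0; apply/matrixP => i j; rewrite mxE.
have j1_lt : (j.+1 < (Zp_trunc (pdiv p)).+2)%N.
  by rewrite Fp_cast // -[j.+1]add1n -ltn_subRL subn1.
have := bexp_eq0 (delta_mx 0 i) (inord j.+1).
rewrite /bexp inordK // (big_pred1 j) => [|j' /=]; last by rewrite eqSS.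
by rewrite -rowE mxE.
Qed.

Theorem lab_normaliser_B_centralises (g : tree_aut p) :
  prime p -> E != 0 -> lab_Sigma g -> tree_normalises (setB_tree E) g ->
  tree_centralises (setB_tree E) g.
Proof.
move=> p_pr E_neq0 labg [normg _] h Bh.
have [k gk] := lab_root_cycle labg.
have shift n : exists n', forall x, bexp E n' (x + k%:R) = bexp E n x.
  have [n' conj_bn] := normg (bport E n) (ex_intro _ n (fun _ => erefl)).
  by exists n'; apply: bexp_conj_shift conj_bn.
have k_eq0 : k%:R = 0 :> X p.
  apply: contraNeq E_neq0 => k_neq0; apply/eqP/bexp_eq0_mx => // n x.
  by have [n' ->] := shift_closed_family_at0 k_neq0 shift n x; apply: bexp0.
have [n' conj_h] : exists n', aut_eq (aut_conj g h) (bport E n') := normg h Bh.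
case: Bh => n hn.
apply: aut_commute_of_conj => v; rewrite conj_h hn; apply: eq_bport => x.
by rewrite -(bexp_conj_shift labg gk hn conj_h x) k_eq0 addr0.
Qed.

End BGenerators.

Theorem mainTheorem7 (p : nat) (r : nat) (E : 'M['F_p]_(r, p.-1)) :
  prime p -> (2 < p)%N -> (0 < r)%N ->
  row_free E ->
  ~~ (E == (const_mx 1 : 'rV['F_p]_(p.-1)))%MS ->
  (forall g : tree_aut p, lab_Sigma g -> tree_normalises (@setA_tree p) g ->
     tree_centralises (@setA_tree p) g) /\
  (forall g : tree_aut p, lab_Sigma g -> tree_normalises (setB_tree E) g ->
     tree_centralises (setB_tree E) g).
Proof.
move=> p_pr _ r_gt0 E_free _.
have E_neq0 : E != 0.
  by apply: contraTneq E_free => ->; rewrite /row_free mxrank0 eq_sym -lt0n r_gt0.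
split=> g labg normg.
- exact: lab_normaliser_A_centralises.
- exact: lab_normaliser_B_centralises.
Qed.
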